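(* Let $\Delta$ and $\chi$ be integers with $2\le \chi\le \Delta$. If $G$ is a graph with maximum degree $\Delta$ and chromatic number $\chi$, then $$\chi'_{inj}(G)\le (\chi-1)\lceil 27\Delta\ln\Delta\rceil.$$ In particular, if $G$ is bipartite (with maximum degree $\Delta\ge 2$), then $\chi'_{inj}(G)\le \lceil 27\Delta\ln\Delta\rceil$.
   Context: All graphs are finite and simple; $\ln$ is the natural logarithm. An edge coloring of a graph $G$ (not necessarily proper) is \emph{injective} if any two distinct edges $e,f$ receive distinct colors whenever either (i) $e$ and $f$ share no vertex and some edge of $G$ joins an endpoint of $e$ to an endpoint of $f$, or (ii) $e$ and $f$ lie in a common triangle of $G$. The injective chromatic index $\chi'_{inj}(G)$ is the minimum number of colors in an injective edge coloring of $G$. *)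

From HB Require Import structures.
From mathcomp Require Import all_boot all_order all_algebra.
Set Implicit Arguments. Unset Strict Implicit. Unset Printing Implicit Defensive.

Definition simple_graph (T : finType) (e : rel T) : Prop :=
  symmetric e /\ irreflexive e.

Definition is_edge (T : finType) (e : rel T) (S : {set T}) : bool :=
  [exists x : T, exists y : T, e x y && (S == [set x; y])].

Definition deg (T : finType) (e : rel T) (x : T) : nat := #|[set y | e x y]|.
Definition max_degree (T : finType) (e : rel T) : nat := \max_(x : T) deg e x.

Definition colorable (T : finType) (e : rel T) (k : nat) : bool :=
  [exists f : {ffun T -> 'I_k}, forall x : T, forall y : T, e x y ==> (f x != f y)].
Definition chromatic_number (T : finType) (e : rel T) : nat :=
  find (colorable e) (iota 0 #|T|.+1).

Definition inj_conflict (T : finType) (e : rel T) (e1 e2 : {set T}) : bool :=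
  [&& is_edge e e1, is_edge e e2, e1 != e2 &
   ([disjoint e1 & e2] && [exists u in e1, exists v in e2, e u v])
   || [exists x : T, exists y : T, exists z : T,
        [&& e x y, e y z, e x z, e1 \subset [set x; y; z] & e2 \subset [set x; y; z]]]].

(* injective edge colourings with k colours (colours on non-edges irrelevant);
   injective chromatic index = least such k (a colouring with #|{set T}|
   colours always exists, so the search range suffices). *)
Definition inj_edge_colorable (T : finType) (e : rel T) (k : nat) : bool :=
  [exists c : {ffun {set T} -> 'I_k}, forall e1 : {set T}, forall e2 : {set T},
     inj_conflict e e1 e2 ==> (c e1 != c e2)].
Definition inj_chromatic_index (T : finType) (e : rel T) : nat :=
  find (inj_edge_colorable e) (iota 0 #|{set T}|.+1).

Definition bipartite (T : finType) (e : rel T) : bool := colorable e 2.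

(* Fix a proper colouring col with c colours, and label each pair (x, i) of a vertex x
   and a layer i < k = ⌈27 Δ ln Δ⌉ independently and uniformly with one of 2Δ labels,
   one of which, y0, is distinguished.  Layer i marks the oriented edge (u, v) when, on
   N(u) ∪ N(v), the label y0 occurs exactly at u.  Colour the edge {u, v} with
   col u < col v by the pair (col v - 1, i) for a layer i marking (u, v): two edges of
   the same colour have non-adjacent far ends (equal vertex colours), and any other
   adjacency between them would put a second y0 into a marked neighbourhood, so they
   never conflict.  The event that no layer marks (u, v) has probability (1 - q)^k with
   q >= 4/(27Δ), hence at most Δ^-4, and it depends on at most 4Δ^3 similar events; for
   Δ >= 16 the symmetric Lovász local lemma, in its counting form on the finite product
   space, yields a labelling marking every edge.  For Δ <= 15 the greedy bound 2Δ^2 + 1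
   is already small enough. *)

From HB Require Import structures.
From mathcomp Require Import all_boot all_order all_algebra.
From mathcomp Require Import all_classical all_reals all_analysis.
From mathcomp Require Import fintype finset.
From mathcomp Require Import zify ring lra.
Import Order.TTheory GRing.Theory Num.Theory.

Set Implicit Arguments.
Unset Strict Implicit.
Unset Printing Implicit Defensive.

Lemma card_bigcup_le (I U : finType) (P : {pred I}) (F : I -> {set U}) :
  (#|\bigcup_(i in P) F i| <= \sum_(i in P) #|F i|)%N.
Proof.
apply: (big_rec2 (fun (V : {set U}) n => #|V| <= n)%N); first by rewrite cards0.
by move=> i V n _ le_Vn; rewrite (leq_trans (leq_card_setU _ _)) ?leq_add2l.
Qed.

Lemma card_bigcup_le_mul (I U : finType) (P : {pred I}) (F : I -> {set U}) n :
  (forall i, i \in P -> #|F i| <= n)%N -> (#|\bigcup_(i in P) F i| <= #|P| * n)%N.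
Proof.
move=> le_Fn; apply: leq_trans (card_bigcup_le P F) _.
by rewrite -sum_nat_const; apply: leq_sum.
Qed.

Lemma exists_setD_card_eq (U : finType) (S1 S2 : {set U}) :
  #|S1| = #|S2| -> S1 != S2 -> exists2 a, a \in S1 & a \notin S2.
Proof.
move=> eq_card neq_S; apply/subsetPn; apply: contra neq_S => sub.
by rewrite eqEcard sub eq_card leqnn.
Qed.

Lemma greedy_colouring (V : finType) (r : rel V) N : (0 < N)%N ->
  (forall x, #|[set y | (y != x) && (r x y || r y x)]| < N)%N ->
  exists f : V -> 'I_N, forall x y, r x y -> x != y -> f x != f y.
Proof.
move=> N_gt0 nbrs_lt.
suff [f fP] : exists f : V -> 'I_N, forall x y, x \in enum V -> y \in enum V ->
    r x y -> x != y -> f x != f y.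
  by exists f => x y; apply: fP; rewrite mem_enum.
elim: (enum V) => [|z s [f fP]]; first by exists (fun=> Ordinal N_gt0).
set nbrs := [set y | (y != z) && (r z y || r y z)].
have [col _ colN] : exists2 col : 'I_N, col \in [set: 'I_N] & col \notin f @: nbrs.
  apply/subsetPn/negP=> /subset_leq_card; rewrite cardsT card_ord.
  by apply/negP; rewrite -ltnNge (leq_ltn_trans (leq_imset_card _ _)) ?nbrs_lt.
have col_fresh y : y != z -> r z y || r y z -> f y != col.
  by move=> yz ryz; apply: contraNneq colN => <-; apply: imset_f; rewrite inE yz.
exists (fun x => if x == z then col else f x) => x y; rewrite !inE.
case: (eqVneq x z) => [->|xz]; case: (eqVneq y z) => [->|yz] //=.
- by move=> _ _ zy _; rewrite eq_sym col_fresh ?zy.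
- by move=> _ _ xy _; rewrite col_fresh ?xy ?orbT.
- exact: fP.
Qed.

Section ProductSpace.
Variables (X Y : finType).
Local Notation Om := {ffun X -> Y}.

Lemma card_ffun_gt0 : (0 < #|Y|)%N -> (0 < #|Om|)%N.
Proof. by rewrite card_ffun expn_gt0 => ->. Qed.

Definition depends_on (A : {set Om}) (D : {set X}) : bool :=
  [forall a : Om, forall b : Om, [forall x in D, a x == b x] ==> ((a \in A) == (b \in A))].

Lemma depends_onP (A : {set Om}) (D : {set X}) :
  reflect (forall a b : Om, {in D, a =1 b} -> (a \in A) = (b \in A)) (depends_on A D).
Proof.
apply: (iffP forallP) => [dA a b eq_ab | dA a]; last first.
  by apply/forallP=> b; apply/implyP=> /forall_inP eq_ab; apply/eqP/dA => x /eq_ab/eqP.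
by apply/eqP; move: (dA a) => /forallP/(_ b)/implyP; apply; apply/forall_inP=> x /eq_ab ->.
Qed.

Lemma depends_on_subset (A : {set Om}) (D D' : {set X}) :
  depends_on A D -> D \subset D' -> depends_on A D'.
Proof.
move=> /depends_onP dA /subsetP sDD'; apply/depends_onP=> a b eq_ab.
by apply: dA => x /sDD'; apply: eq_ab.
Qed.

Lemma depends_on_setC (A : {set Om}) (D : {set X}) : depends_on A D -> depends_on (~: A) D.
Proof.
by move=> /depends_onP dA; apply/depends_onP=> a b eq_ab; rewrite !inE (dA a b eq_ab).
Qed.

Lemma depends_on_bigcap (J : Type) (s : seq J) (P : pred J) (F : J -> {set Om}) (D : {set X}) :
  (forall t, P t -> depends_on (F t) D) -> depends_on (\bigcap_(t <- s | P t) F t) D.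
Proof.
move=> dF; apply: (big_ind (depends_on^~ D)) => [|A B /depends_onP dA /depends_onP dB|//].
  by apply/depends_onP=> a b _; rewrite !inE.
by apply/depends_onP=> a b eq_ab; rewrite !inE (dA a b eq_ab) (dB a b eq_ab).
Qed.

(* Exchanging the coordinates outside D between two outcomes is a bijection of
   Om * Om taking (A :&: B) * Om onto A * B. *)
Lemma card_setI_indep (A B : {set Om}) (D : {set X}) :
  depends_on A D -> depends_on B (~: D) -> (#|A :&: B| * #|Om| = #|A| * #|B|)%N.
Proof.
move=> /depends_onP dA /depends_onP dB.
pose mix (a b : Om) : Om := [ffun x => if x \in D then a x else b x].
pose swap (p : Om * Om) := (mix p.1 p.2, mix p.2 p.1).
have swapK : involutive swap.
  by case=> a b; congr pair; apply/ffunP=> x; rewrite !ffunE; case: (x \in D).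
have mixA a b : (mix a b \in A) = (a \in A).
  by apply: dA => x xD; rewrite ffunE xD.
have mixB a b : (mix a b \in B) = (b \in B).
  by apply: dB => x; rewrite inE ffunE => /negbTE ->.
pose P := setX (A :&: B) [set: Om]; pose Q := setX A B.
have sPQ : swap @: P \subset Q.
  by apply/subsetP=> _ /imsetP[[a b] /setXP[/setIP[aA aB] _] ->]; rewrite inE /= mixA mixB aA.
have sQP : swap @: Q \subset P.
  by apply/subsetP=> _ /imsetP[[a b] /setXP[aA bB] ->]; rewrite !inE /= mixA mixB aA bB.
have swap_inj : injective swap := inv_inj swapK.
have := subset_leq_card sPQ; have := subset_leq_card sQP.
rewrite !card_imset // => leQP lePQ.
have : #|P| = #|Q| by apply/eqP; rewrite eqn_leq lePQ leQP.
by rewrite !cardsX cardsT.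
Qed.

Lemma card_coord_eq (x : X) (y : Y) :
  (#|[set w : Om | w x == y]| * #|Y| = #|Om|)%N.
Proof.
have le_fibres y1 y2 : (#|[set w : Om | w x == y1]| <= #|[set w : Om | w x == y2]|)%N.
  pose f (w : Om) : Om := [ffun z => if z == x then y2 else w z].
  have f_inj : {in [set w : Om | w x == y1] &, injective f}.
    move=> a b; rewrite !inE => /eqP ax /eqP bx /ffunP eq_fab; apply/ffunP=> z.
    by have := eq_fab z; rewrite !ffunE; case: eqP => [->|//]; rewrite ax bx.
  rewrite -(card_in_imset f_inj); apply: subset_leq_card.
  by apply/subsetP=> _ /imsetP[a _ ->]; rewrite inE ffunE eqxx.
have -> : #|Om| = (\sum_(j : Y) #|[set w : Om | w x == j]|)%N.
  rewrite -sum1_card (partition_big (fun w : Om => w x) predT) //=.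
  by apply: eq_bigr => j _; rewrite sum1dep_card.
rewrite (eq_bigr (fun=> #|[set w : Om | w x == y]|)) => [|j _]; last first.
  by apply/eqP; rewrite eqn_leq !le_fibres.
by rewrite sum_nat_const mulnC.
Qed.

End ProductSpace.

Section LovaszLocalLemma.
Variables (X Y I : finType) (A : I -> {set {ffun X -> Y}}) (D : I -> {set X}).
Local Notation Om := {ffun X -> Y}.

Definition avoiding (S : {set I}) : {set Om} := \bigcap_(j in S) ~: A j.

Definition dependents (i : I) : {set I} :=
  [set j | (j != i) && ~~ [disjoint D i & D j]].

Lemma avoidingP w (S : {set I}) : reflect (forall j, j \in S -> w \notin A j) (w \in avoiding S).
Proof.
by apply: (iffP bigcapP) => avS j /avS; rewrite inE.
Qed.

Lemma in_avoiding w (S : {set I}) :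
  (w \in avoiding S) = [forall (j | j \in S), w \notin A j].
Proof. exact/avoidingP/forall_inP. Qed.

Lemma avoiding_setU1 i (S : {set I}) : avoiding (i |: S) = avoiding S :\: A i.
Proof.
apply/setP=> w; rewrite !inE; apply/avoidingP/andP => [avS|[wAi /avoidingP avS] j].
  by split; [apply: avS; rewrite setU11 | apply/avoidingP=> j jS; apply: avS; rewrite setU1r].
by case/setU1P=> [->|]; [exact: wAi | exact: avS].
Qed.

Lemma avoiding_subset (S S' : {set I}) : S' \subset S -> avoiding S \subset avoiding S'.
Proof.
move=> /subsetP sS'S; apply/subsetP=> w /avoidingP avS.
by apply/avoidingP=> j /sS'S; apply: avS.
Qed.

Lemma card_avoiding_le (S1 S2 : {set I}) :
  (#|avoiding S2| <= #|avoiding (S1 :|: S2)| + \sum_(j in S1) #|A j :&: avoiding S2|)%N.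
Proof.
have sub : avoiding S2 \subset
    avoiding (S1 :|: S2) :|: \bigcup_(j in S1) (A j :&: avoiding S2).
  apply/subsetP=> w avS2; apply/setUP.
  case avS: (w \in avoiding (S1 :|: S2)); [by left | right].
  have [j jS wAj] : exists2 j, j \in S1 :|: S2 & w \in A j.
    move/negbT: avS; rewrite in_avoiding negb_forall => /existsP[j].
    by rewrite negb_imply negbK => /andP[]; exists j.
  apply/bigcupP; exists j; last by rewrite inE wAj.
  by case/setUP: jS => // jS2; move/avoidingP: avS2 => /(_ j jS2); rewrite wAj.
apply: leq_trans (subset_leq_card sub) _.
by apply: leq_trans (leq_card_setU _ _).1 _; rewrite leq_add2l card_bigcup_le.
Qed.

Hypothesis A_dep : forall i, depends_on (A i) (D i).

Lemma card_avoiding_indep i (S : {set I}) : (forall j, j \in S -> [disjoint D i & D j]) ->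
  (#|A i :&: avoiding S| * #|Om| = #|A i| * #|avoiding S|)%N.
Proof.
move=> disjS; apply: card_setI_indep (A_dep i) _.
apply: depends_on_bigcap => j jS; apply: depends_on_setC.
apply: depends_on_subset (A_dep j) _; apply/subsetP=> x xDj; rewrite inE.
by rewrite (disjointFl (disjS j jS) xDj).
Qed.

Variable d : nat.
Hypothesis d_gt0 : (0 < d)%N.
Hypothesis dependents_le : forall i, (#|dependents i| <= d)%N.
Hypothesis A_small : forall i, (#|A i| * (4 * d) <= #|Om|)%N.
Hypothesis Y_gt0 : (0 < #|Y|)%N.

Lemma avoiding_cond_le n (S : {set I}) i : (#|S| < n)%N -> i \notin S ->
  (2 * d * #|A i :&: avoiding S| <= #|avoiding S|)%N.
Proof.
elim: n S i => [//|n IH] S i ltSn iNS.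
set Sn := S :&: dependents i; set Sf := S :\: dependents i.
have le_far : (#|A i :&: avoiding S| <= #|A i :&: avoiding Sf|)%N.
  exact/subset_leq_card/setIS/avoiding_subset/subsetDl.
have indep : (4 * d * #|A i :&: avoiding Sf| <= #|avoiding Sf|)%N.
  have disj_far j : j \in Sf -> [disjoint D i & D j].
    case/setDP=> jS; rewrite inE negb_and !negbK => /orP[/eqP eji|//].
    by rewrite -eji jS in iNS.
  rewrite -(@leq_pmul2r #|Om|) ?card_ffun_gt0 // -mulnA card_avoiding_indep // mulnCA mulnA.
  by rewrite mulnC leq_mul2l A_small orbT.
have near j : j \in Sn -> (2 * d * #|A j :&: avoiding Sf| <= #|avoiding Sf|)%N.
  case/setIP=> jS jdep; apply: IH; last by rewrite inE jdep.
  rewrite -ltnS (leq_trans _ ltSn) // ltnS (cardsD1 j S) jS add1n ltnS.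
  apply/subset_leq_card/subsetP=> x /setDP[xS xNdep]; rewrite !inE xS andbT.
  by apply: contraNneq xNdep => ->.
have union : (#|avoiding Sf| <= #|avoiding S| + \sum_(j in Sn) #|A j :&: avoiding Sf|)%N.
  by rewrite -{1}(setID S (dependents i)) card_avoiding_le.
have sum_near : (2 * d * \sum_(j in Sn) #|A j :&: avoiding Sf| <= d * #|avoiding Sf|)%N.
  rewrite big_distrr /= (leq_trans (leq_sum _ near)) // sum_nat_const leq_mul2r.
  by rewrite (leq_trans (subset_leq_card (subsetIr _ _))) ?dependents_le ?orbT.
nia.
Qed.

Lemma avoiding_gt0 (S : {set I}) : (0 < #|avoiding S|)%N.
Proof.
elim: {S}_.+1 {-2}S (ltnSn #|S|) => // n IH S ltSn.
have [S0|[i iS]] := set_0Vmem S.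
  by rewrite S0 /avoiding big_set0 cardsT card_ffun_gt0.
have iNS' : i \notin S :\ i by rewrite !inE eqxx.
have ltS'n : (#|S :\ i| < n)%N by move: ltSn; rewrite (cardsD1 i S) iS.
rewrite -(setD1K iS) avoiding_setU1 cardsD setIC.
have := avoiding_cond_le ltS'n iNS'; have := IH _ ltS'n.
nia.
Qed.

Theorem lovasz_local_lemma : exists w : Om, forall i, w \notin A i.
Proof.
have /card_gt0P[w /avoidingP avT] := avoiding_gt0 setT.
by exists w => i; apply: avT; rewrite inE.
Qed.

End LovaszLocalLemma.

Section UniformProbability.
Variables (R : realFieldType) (X Y : finType).
Hypothesis Y_gt0 : (0 < #|Y|)%N.
Local Notation Om := {ffun X -> Y}.
Local Open Scope ring_scope.

Definition Pr (A : {set Om}) : R := #|A|%:R / #|Om|%:R.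

Let Om_neq0 : #|Om|%:R != 0 :> R. Proof. by rewrite pnatr_eq0 -lt0n card_ffun_gt0. Qed.

Lemma Pr_mulr_le1 (A : {set Om}) n : (Pr A * n%:R <= 1) = (#|A| * n <= #|Om|)%N.
Proof.
by rewrite /Pr mulrAC ler_pdivrMr ?ltr0n ?card_ffun_gt0 // mul1r -natrM ler_nat.
Qed.

Lemma Pr_setT : Pr setT = 1.
Proof. by rewrite /Pr cardsT divff. Qed.

Lemma Pr_setC (A : {set Om}) : Pr (~: A) = 1 - Pr A.
Proof.
apply: (mulIf Om_neq0); rewrite mulrBl mul1r !mulfVK // -(cardsC A) natrD.
by rewrite addrC addKr.
Qed.

Lemma Pr_setI_indep (A B : {set Om}) (D : {set X}) :
  depends_on A D -> depends_on B (~: D) -> Pr (A :&: B) = Pr A * Pr B.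
Proof.
move=> dA dB; have /(congr1 (fun n => n%:R : R)) := card_setI_indep dA dB.
rewrite !natrM /Pr => eq_card.
have -> : #|A :&: B|%:R = #|A|%:R * #|B|%:R / #|Om|%:R :> R by rewrite -eq_card mulfK.
by field.
Qed.

Lemma Pr_coord (x : X) (y : Y) : Pr [set w : Om | w x == y] = #|Y|%:R^-1.
Proof.
have fibre_neq0 : #|[set w : Om | w x == y]|%:R != 0 :> R.
  by rewrite pnatr_eq0 -lt0n; apply/card_gt0P; exists [ffun=> y]; rewrite inE ffunE.
have /(congr1 (fun n => n%:R : R)) := card_coord_eq x y.
by rewrite natrM /Pr => <-; rewrite invfM mulrA mulfV ?mul1r.
Qed.

Lemma Pr_bigcap_seq (J : eqType) (s : seq J) (F : J -> {set Om}) (D : J -> {set X}) :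
  uniq s -> (forall t, depends_on (F t) (D t)) ->
  {in s &, forall t t', t != t' -> [disjoint D t & D t']} ->
  Pr (\bigcap_(t <- s) F t) = \prod_(t <- s) Pr (F t).
Proof.
elim: s => [|t s IH] /= uniq_s dF disjD; first by rewrite !big_nil Pr_setT.
case/andP: uniq_s => tNs uniq_s.
rewrite !big_cons (Pr_setI_indep (dF t)); first congr (_ * _).
  by apply: IH => // t1 t2 t1s t2s; apply: disjD; rewrite inE ?t1s ?t2s orbT.
rewrite big_seq; apply: depends_on_bigcap => t' t's.
apply: depends_on_subset (dF t') _; apply/subsetP=> x xDt'; rewrite inE.
have tt' : t != t' by apply: contraNneq tNs => ->.
by rewrite (disjointFl (disjD t t' (mem_head _ _) _ tt') xDt') // inE t's orbT.
Qed.

Lemma Pr_bigcap (J : finType) (P : pred J) (F : J -> {set Om}) (D : J -> {set X}) :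
  (forall t, depends_on (F t) (D t)) ->
  (forall t t', P t -> P t' -> t != t' -> [disjoint D t & D t']) ->
  Pr (\bigcap_(t | P t) F t) = \prod_(t | P t) Pr (F t).
Proof.
move=> dF disjD; rewrite -big_filter -[RHS]big_filter.
apply: Pr_bigcap_seq; rewrite ?filter_uniq ?index_enum_uniq // => t t'.
by rewrite !mem_filter => /andP[Pt _] /andP[Pt' _]; apply: disjD.
Qed.

End UniformProbability.

Section RealBounds.
Variable R : realType.
Local Open Scope ring_scope.

Lemma expR_le_invB (x : R) : 0 <= x < 1 -> expR x <= (1 - x)^-1.
Proof.
case/andP=> x_ge0 x_lt1; have := expR_ge1Dx (- x); rewrite expRN => le_expRN.
by rewrite -[X in X <= _]invrK lef_pV2 ?posrE ?invr_gt0 ?expR_gt0 //; lra.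
Qed.

Lemma pow1D_le_expR (x : R) n : -1 <= x -> (1 + x) ^+ n <= expR (n%:R * x).
Proof.
move=> x_geN1; rewrite expRM_natl; apply: lerXn2r; rewrite ?nnegrE ?expR_ge0 //.
  by lra.
exact: expR_ge1Dx.
Qed.

Lemma expR1_le : expR (1 : R) <= 27 / 8.
Proof.
have le_quarter : expR (4^-1 : R) <= 4 / 3.
  apply: le_trans (expR_le_invB _) _; first lra.
  by rewrite (_ : 1 - 4^-1 = 3 / 4 :> R) ?invf_div //; field.
rewrite -[1 : R](@mulfV _ 4) // expRM_natl.
apply: le_trans (_ : (4 / 3) ^+ 4 <= _).
  by apply: lerXn2r; rewrite ?nnegrE ?expR_ge0 //; lra.
by rewrite (_ : (4 / 3) ^+ 4 = 256 / 81 :> R); [lra | field].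
Qed.

Lemma ln2_ge : 2^-1 <= ln (2 : R).
Proof.
have le_half : expR (2^-1 : R) <= 2.
  apply: le_trans (expR_le_invB _) _; first lra.
  by rewrite (_ : 1 - 2^-1 = 2^-1 :> R) ?invrK //; field.
by rewrite -[X in X <= _]expRK ler_ln ?posrE ?expR_gt0.
Qed.

Lemma expRN1_le_pow n : (0 < n)%N -> expR (-1) <= (1 - n.+1%:R^-1) ^+ n :> R.
Proof.
move=> n_gt0; have n_ge1 : 1 <= n%:R :> R by rewrite (ler_nat R 1).
have inv_gt0 : 0 < n%:R^-1 :> R by rewrite invr_gt0; lra.
have -> : 1 - n.+1%:R^-1 = (1 + n%:R^-1)^-1 :> R.
  by rewrite -natr1; field; apply/andP; split; apply/eqP; lra.
rewrite exprVn expRN lef_pV2 ?posrE ?expR_gt0 ?exprn_gt0 //; try lra.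
by have := @pow1D_le_expR n%:R^-1 n; rewrite mulfV ?pnatr_eq0 -?lt0n //; apply; lra.
Qed.

(* (1 - 1/(2Δ))^w >= 1/e >= 8/27: this is where the constant 27 comes from. *)
Lemma mark_prob_ge (Dl w : nat) : (0 < Dl)%N -> (w < Dl.*2)%N ->
  4 / (27 * Dl%:R) <= Dl.*2%:R^-1 * (1 - Dl.*2%:R^-1) ^+ w :> R.
Proof.
move=> Dl_gt0 lt_w_m; have D_ge1 : 1 <= Dl%:R :> R by rewrite (ler_nat R 1).
have m_eq : Dl.*2 = (Dl.*2.-1).+1 by rewrite prednK // double_gt0.
have mR : Dl.*2%:R = 2 * Dl%:R :> R by rewrite -mul2n natrM.
have inv_m : 0 <= (Dl.*2%:R : R)^-1 <= 1.
  by rewrite invr_ge0 ler0n invf_le1 mR; lra.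
have e_inv_ge : 8 / 27 <= expR (-1) :> R.
  rewrite expRN -(invf_div 27 8) lef_pV2 ?posrE ?expR_gt0 ?expR1_le //; lra.
have le_e_pow : expR (-1) <= (1 - Dl.*2%:R^-1) ^+ w :> R.
  apply: le_trans (@expRN1_le_pow Dl.*2.-1 _) _; first by rewrite -ltnS -m_eq; lia.
  rewrite -m_eq; apply: ler_wiXn2l; try lra.
  by rewrite -ltnS -m_eq.
rewrite (_ : 4 / (27 * Dl%:R) = Dl.*2%:R^-1 * (8 / 27)); last by rewrite mR; field; lra.
by apply: ler_wpM2l; [case/andP: inv_m | apply: le_trans le_e_pow].
Qed.

(* (1 - q)^k <= exp(-kq) <= exp(-4 ln Δ) = Δ^-4, and 16 Δ^3 <= Δ^4. *)
Lemma unmarked_prob_le (Dl k w : nat) : (16 <= Dl)%N -> (w < Dl.*2)%N ->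
  27 * Dl%:R * ln (Dl%:R : R) <= k%:R ->
  (1 - Dl.*2%:R^-1 * (1 - Dl.*2%:R^-1) ^+ w) ^+ k * (16 * Dl%:R ^+ 3) <= 1 :> R.
Proof.
move=> D_ge16 lt_w_m le_k; have DR : 16 <= Dl%:R :> R by rewrite (ler_nat R 16).
have Dl_gt0 : (0 < Dl)%N by lia.
have := mark_prob_ge Dl_gt0 lt_w_m; set q := (Dl.*2%:R^-1 * _) => q_ge.
have q_le1 : q <= 1.
  have inv_m : 0 <= (Dl.*2%:R : R)^-1 <= 1.
    by rewrite invr_ge0 ler0n invf_le1 -mul2n natrM; lra.
  have : (1 - Dl.*2%:R^-1) ^+ w <= 1 :> R by apply: exprn_ile1; lra.
  have : 0 <= (1 - Dl.*2%:R^-1) ^+ w :> R by apply: exprn_ge0; lra.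
  rewrite /q; nra.
have ln_ge0 : 0 <= ln (Dl%:R : R) by apply: ln_ge0; lra.
have kq_ge : 4 * ln (Dl%:R : R) <= k%:R * q.
  apply: le_trans (_ : k%:R * (4 / (27 * Dl%:R)) <= _); last first.
    by apply: ler_wpM2l; rewrite ?ler0n.
  by rewrite mulrA ler_pdivlMr; nra.
have le_exp : (1 - q) ^+ k <= expR (- (k%:R * q)).
  by have := @pow1D_le_expR (- q) k; rewrite mulrN; apply; lra.
have exp_le : expR (- (k%:R * q)) <= (Dl%:R ^+ 4)^-1.
  rewrite -(@lnK _ Dl%:R) ?posrE; last lra.
  by rewrite -expRM_natl -expRN ler_expR; lra.
apply: le_trans (_ : (Dl%:R ^+ 4)^-1 * (16 * Dl%:R ^+ 3) <= 1).
  by apply: ler_wpM2r; [rewrite mulr_ge0 ?exprn_ge0 //; lra | apply: le_trans exp_le].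
rewrite (_ : (Dl%:R ^+ 4)^-1 * (16 * Dl%:R ^+ 3) = 16 / (Dl%:R : R)).
  by rewrite ler_pdivrMr; lra.
by field; lra.
Qed.

Lemma ln_ge_half_log2 (j n : nat) : (2 ^ j <= n)%N -> j%:R / 2 <= ln (n%:R : R).
Proof.
move=> le_2j_n; apply: le_trans (_ : ln ((2 ^ j)%:R) <= _); last first.
  rewrite ler_ln ?posrE ?ler_nat ?ltr0n ?expn_gt0 //.
  by apply: leq_trans le_2j_n; rewrite expn_gt0.
rewrite natrX lnXn // -mulr_natl.
by have := ln2_ge; have : 0 <= j%:R :> R by []; nra.
Qed.

Lemma greedy_bound_small_degree (Dl : nat) : (2 <= Dl)%N -> (Dl <= 15)%N ->
  (2 * Dl ^ 2).+1%:R <= 27 * Dl%:R * ln (Dl%:R : R).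
Proof.
move=> D_ge2 D_le15; rewrite -natr1 natrM natrX.
have D_ge2R : 2 <= Dl%:R :> R by rewrite (ler_nat R 2).
have D_le15R : Dl%:R <= 15 :> R by rewrite (ler_nat R _ 15).
case: (ltnP Dl 4) => [D_lt4|D_ge4].
  have := @ln_ge_half_log2 1 Dl D_ge2; have : Dl%:R <= 3 :> R by rewrite (ler_nat R _ 3).
  by nra.
case: (ltnP Dl 8) => [D_lt8|D_ge8].
  have := @ln_ge_half_log2 2 Dl D_ge4; have : Dl%:R <= 7 :> R by rewrite (ler_nat R _ 7).
  by nra.
by have := @ln_ge_half_log2 3 Dl D_ge8; nra.
Qed.

End RealBounds.

Section Neighbourhoods.
Variables (T : finType) (e : rel T).

Definition nbhd (x : T) : {set T} := [set y | e x y].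
Definition edge_nbhd (u v : T) : {set T} := nbhd u :|: nbhd v.

Hypothesis e_sym : symmetric e.

Lemma edge_nbhd_l u v : e u v -> u \in edge_nbhd u v.
Proof. by move=> uv; rewrite !inE e_sym uv orbT. Qed.

Variable Dl : nat.
Hypothesis deg_le : forall x, (deg e x <= Dl)%N.

Lemma card_edge_nbhd u v : (#|edge_nbhd u v| <= Dl.*2)%N.
Proof.
apply: leq_trans (leq_card_setU _ _).1 _.
by rewrite -addnn; exact: leq_add (deg_le u) (deg_le v).
Qed.

Lemma card_arcs_meeting (Z : {set T}) :
  (#|[set j : T * T | e j.1 j.2 && ((j.1 \in Z) || (j.2 \in Z))]| <= #|Z| * Dl.*2)%N.
Proof.
pose F z := [set (z, y) | y in nbhd z] :|: [set (y, z) | y in nbhd z].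
have sub : [set j : T * T | e j.1 j.2 && ((j.1 \in Z) || (j.2 \in Z))]
    \subset \bigcup_(z in Z) F z.
  apply/subsetP=> -[x y]; rewrite inE /= => /andP[xy /orP[xZ|yZ]]; apply/bigcupP.
    by exists x => //; apply/setUP; left; apply/imsetP; exists y; rewrite ?inE.
  by exists y => //; apply/setUP; right; apply/imsetP; exists x; rewrite ?inE 1?e_sym.
apply: leq_trans (subset_leq_card sub) (card_bigcup_le_mul _) => z _.
apply: leq_trans (leq_card_setU _ _).1 _.
by rewrite -addnn leq_add // (leq_trans (leq_imset_card _ _)) //; exact: deg_le.
Qed.

End Neighbourhoods.

Section Marking.
Variables (T : finType) (e : rel T) (k : nat) (Y : finType) (y0 : Y).
Local Notation labelling := {ffun T * 'I_k -> Y}.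

Definition marks (w : labelling) (i : 'I_k) (u v : T) : bool :=
  [forall z in edge_nbhd e u v, (w (z, i) == y0) == (z == u)].

Lemma marks_eq_y0 w i u v z : marks w i u v -> z \in edge_nbhd e u v ->
  w (z, i) = y0 -> z = u.
Proof. by move=> /forall_inP/(_ z) mk /mk /eqP eq_zu wz; apply/eqP; rewrite -eq_zu wz. Qed.

Hypothesis e_sym : symmetric e.

Lemma marks_y0 w i u v : e u v -> marks w i u v -> w (u, i) = y0.
Proof. by move=> uv /forall_inP/(_ u (edge_nbhd_l e_sym uv)); rewrite eqxx eqb_id => /eqP. Qed.

Definition marked_event (i : 'I_k) (u v : T) : {set labelling} :=
  [set w | marks w i u v].

Definition unmarked_event (u v : T) : {set labelling} :=
  \bigcap_(i : 'I_k) ~: marked_event i u v.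

Lemma marked_eventE i u v : marked_event i u v =
  \bigcap_(z in edge_nbhd e u v) [set w : labelling | (w (z, i) == y0) == (z == u)].
Proof.
apply/setP=> w; rewrite inE; apply/forall_inP/bigcapP => mk z /mk; first by rewrite inE.
by rewrite inE.
Qed.

Lemma depends_on_marked i u v :
  depends_on (marked_event i u v) (setX (edge_nbhd e u v) [set i]).
Proof.
apply/depends_onP=> a b eq_ab; rewrite !inE; apply: eq_forallb_in => z zE.
by rewrite eq_ab // in_setX zE set11.
Qed.

Lemma depends_on_unmarked u v :
  depends_on (unmarked_event u v) (setX (edge_nbhd e u v) [set: 'I_k]).
Proof.
apply: depends_on_bigcap => i _; apply/depends_on_setC.
apply: depends_on_subset (depends_on_marked i u v) _.
by apply: setXS; rewrite ?subsetT.
Qed.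

Variable R : realFieldType.
Local Open Scope ring_scope.

Let Y_gt0 : (0 < #|Y|)%N. Proof. by apply/card_gt0P; exists y0. Qed.

Lemma Pr_coord_eqb (x : T * 'I_k) (b : bool) :
  Pr R [set w : labelling | (w x == y0) == b] = if b then #|Y|%:R^-1 else 1 - #|Y|%:R^-1.
Proof.
have <- := Pr_coord R x y0; case: b; last rewrite -Pr_setC //.
  by congr Pr; apply/setP=> w; rewrite !inE eqb_id.
by congr Pr; apply/setP=> w; rewrite !inE eqbF_neg.
Qed.

Lemma Pr_marked i u v : e u v -> Pr R (marked_event i u v) =
  #|Y|%:R^-1 * (1 - #|Y|%:R^-1) ^+ #|edge_nbhd e u v :\ u|.
Proof.
move=> uv; rewrite marked_eventE (@Pr_bigcap R _ _ Y_gt0 _ _ _ (fun z => [set (z, i)])).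
- under eq_bigr => z _ do rewrite Pr_coord_eqb.
  rewrite (bigD1 u) ?edge_nbhd_l //= eqxx; congr (_ * _).
  rewrite -prodr_const; apply: eq_big => [z|z]; first by rewrite in_setD1 andbC.
  by case/andP=> _ /negbTE ->.
- move=> z; apply/depends_onP=> a b eq_ab; rewrite !inE eq_ab ?inE //.
- by move=> z z' _ _ zz'; rewrite disjoints1 inE xpair_eqE eqxx andbT.
Qed.

Lemma Pr_unmarked u v : e u v -> Pr R (unmarked_event u v) =
  (1 - #|Y|%:R^-1 * (1 - #|Y|%:R^-1) ^+ #|edge_nbhd e u v :\ u|) ^+ k.
Proof.
move=> uv; rewrite (@Pr_bigcap R _ _ Y_gt0 _ _ _ (fun i => setX (edge_nbhd e u v) [set i])).
- under eq_bigr => i _ do rewrite Pr_setC // Pr_marked //.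
  by rewrite prodr_const card_ord.
- by move=> i; apply/depends_on_setC/depends_on_marked.
- move=> i i' _ _ ii'; rewrite -setI_eq0; apply/eqP/setP=> -[z j]; rewrite !inE.
  by apply/negP=> /andP[/andP[_ /eqP->] /andP[_ /eqP ij]]; rewrite ij eqxx in ii'.
Qed.

End Marking.

Section MarkingLabelling.
Variables (T : finType) (e : rel T).
Hypothesis e_sym : symmetric e.
Variables (Dl k : nat).
Hypothesis deg_le : forall x, (deg e x <= Dl)%N.

(* Events are indexed by all ordered pairs; a non-edge gets the empty event and the
   empty support, so it is nobody's dependent. *)
Definition edge_event_support (p : T * T) : {set T * 'I_k} :=
  if e p.1 p.2 then setX (edge_nbhd e p.1 p.2) [set: 'I_k] else set0.

Lemma card_dependents p : (#|dependents edge_event_support p| <= 4 * Dl ^ 3)%N.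
Proof.
case: p => u v; rewrite /dependents /edge_event_support /=.
case: (boolP (e u v)) => [uv|_] /=; last first.
  rewrite (_ : [set _ | _] = set0) ?cards0 //; apply/eqP; rewrite -subset0.
  by apply/subsetP=> j; rewrite !inE -setI_eq0 set0I eqxx andbF.
set Z := \bigcup_(z in edge_nbhd e u v) nbhd e z.
have sub : [set j | (j != (u, v)) && ~~ [disjoint setX (edge_nbhd e u v) [set: 'I_k]
                                         & edge_event_support j]]
    \subset [set j : T * T | e j.1 j.2 && ((j.1 \in Z) || (j.2 \in Z))].
  apply/subsetP=> -[x y]; rewrite !inE /edge_event_support /=.
  case: (boolP (e x y)) => [xy|_]; last by rewrite -setI_eq0 setI0 eqxx andbF.
  case/andP=> _ /pred0Pn[[z t]]; rewrite /= !inE => /andP[/andP[zE _] /andP[/orP zxy _]].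
  apply/orP; case: zxy => [xz|yz]; [left | right]; apply/bigcupP;
    by exists z; rewrite !inE // e_sym.
have card_Z : (#|Z| <= Dl.*2 * Dl)%N.
  apply: leq_trans (@card_bigcup_le_mul _ _ _ _ Dl _) _ => [z _|]; first exact: deg_le.
  by rewrite leq_mul2r (card_edge_nbhd deg_le) orbT.
apply: leq_trans (subset_leq_card sub) _.
apply: leq_trans (card_arcs_meeting e_sym deg_le Z) _.
by apply: leq_trans (leq_mul card_Z (leqnn Dl.*2)) _; rewrite -!mul2n; nia.
Qed.

Local Open Scope ring_scope.

Lemma exists_marking_labelling (R : realType) (Y : finType) (y0 : Y) :
  #|Y| = Dl.*2 -> (16 <= Dl)%N -> 27 * Dl%:R * ln (Dl%:R : R) <= k%:R ->
  exists w : {ffun T * 'I_k -> Y}, forall u v, e u v -> exists i, marks e y0 w i u v.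
Proof.
move=> card_Y D_ge16 le_k; have Y_gt0 : (0 < #|Y|)%N by apply/card_gt0P; exists y0.
pose A (p : T * T) := if e p.1 p.2 then unmarked_event e k y0 p.1 p.2 else set0.
have A_dep p : depends_on (A p) (edge_event_support p).
  rewrite /A /edge_event_support; case: ifP => _; first exact: depends_on_unmarked.
  by apply/depends_onP=> a b _; rewrite !inE.
have A_small p : (#|A p| * (4 * (4 * Dl ^ 3)) <= #|{ffun T * 'I_k -> Y}|)%N.
  rewrite /A; case: ifP => [uv|_]; last by rewrite cards0.
  rewrite -(Pr_mulr_le1 R Y_gt0) Pr_unmarked // card_Y mulnA natrM natrX.
  apply: unmarked_prob_le => //; have := card_edge_nbhd deg_le p.1 p.2.
  by rewrite (cardsD1 p.1) edge_nbhd_l.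
have d_gt0 : (0 < 4 * Dl ^ 3)%N by rewrite muln_gt0 expn_gt0; lia.
have [w avoid] := lovasz_local_lemma A_dep d_gt0 card_dependents A_small Y_gt0.
exists w => u v uv; have [i mk|unmarked] := pickP (fun i => marks e y0 w i u v).
  by exists i.
case/negP: (avoid (u, v)); rewrite /A /= uv; apply/bigcapP=> i _.
by rewrite !inE unmarked.
Qed.

End MarkingLabelling.

Section InjectiveColourings.
Variables (T : finType) (e : rel T).

Lemma inj_chromatic_index_le (C : finType) (f : {set T} -> C) :
  (forall S1 S2, inj_conflict e S1 S2 -> f S1 != f S2) -> (inj_chromatic_index e <= #|C|)%N.
Proof.
move=> fP; have colourable : inj_edge_colorable e #|C|.
  apply/existsP; exists [ffun S => enum_rank (f S)].
  apply/forallP=> S1; apply/forallP=> S2; apply/implyP=> conf.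
  by rewrite !ffunE (inj_eq enum_rank_inj) fP.
rewrite /inj_chromatic_index; case: (ltnP #|C| #|{set T}|.+1) => [lt_C|le_C].
  by rewrite leqNgt; apply/negP=> /(before_find 0%N); rewrite nth_iota // add0n colourable.
by apply: leq_trans (find_size _ _) _; rewrite size_iota.
Qed.

Hypotheses (e_sym : symmetric e) (e_irr : irreflexive e).

Lemma is_edgeP S : reflect (exists u v, e u v /\ S = [set u; v]) (is_edge e S).
Proof.
apply: (iffP existsP) => [[u /existsP[v /andP[uv /eqP->]]]|[u [v [uv ->]]]].
  by exists u, v.
by exists u; apply/existsP; exists v; rewrite uv eqxx.
Qed.

Lemma card_edge S : is_edge e S -> #|S| = 2.
Proof.
by case/is_edgeP=> u [v [uv ->]]; rewrite cards2; case: eqP uv => [->|//]; rewrite e_irr.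
Qed.

Lemma triangle_adj x y z a b : e x y -> e y z -> e x z ->
  a \in [set x; y; z] -> b \in [set x; y; z] -> a != b -> e a b.
Proof.
move=> xy yz xz; rewrite !inE.
by do 2![case/orP=> [/orP[]|] /eqP->]; rewrite ?eqxx // => _; rewrite 1?e_sym.
Qed.

Lemma inj_conflict_adjacent S1 S2 : inj_conflict e S1 S2 ->
  exists a b, [/\ a \in S1, a \notin S2, b \in S2, b \notin S1 & e a b].
Proof.
case/and4P=> edge1 edge2 neq_S /orP[/andP[disj /exists_inP[a aS1 /exists_inP[b bS2 ab]]]|].
  exists a, b; split=> //; apply/negP.
    by rewrite (disjointFr disj aS1).
  by rewrite (disjointFl disj bS2).
case/existsP=> x /existsP[y /existsP[z /and5P[xy yz xz sub1 sub2]]].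
have eq_card : #|S1| = #|S2| by rewrite !card_edge.
have [a aS1 aNS2] := exists_setD_card_eq eq_card neq_S.
have neq_S' : S2 != S1 by rewrite eq_sym.
have [b bS2 bNS1] := exists_setD_card_eq (esym eq_card) neq_S'.
have ab : a != b by apply: contraNneq aNS2 => ->.
exists a, b; split=> //.
by apply: triangle_adj xy yz xz _ _ ab; [apply: (subsetP sub1) | apply: (subsetP sub2)].
Qed.

Lemma inj_conflict_meets_edge_nbhd u v S : e u v ->
  inj_conflict e [set u; v] S || inj_conflict e S [set u; v] ->
  exists2 b, b \in S & b \in edge_nbhd e u v.
Proof.
move=> uv /orP[] /inj_conflict_adjacent[a [b [aS _ bS _ ab]]].
  by exists b => //; move: ab aS; rewrite !inE => ab /orP[] /eqP ea; rewrite -ea ab ?orbT.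
by exists a => //; move: ab bS; rewrite !inE => ab /orP[] /eqP eb;
  rewrite -eb (e_sym b) ab ?orbT.
Qed.

Lemma card_inj_conflicts_le Dl S1 : (forall x, deg e x <= Dl)%N ->
  (#|[set S2 | (S2 != S1) && (inj_conflict e S1 S2 || inj_conflict e S2 S1)]| <= 2 * Dl ^ 2)%N.
Proof.
move=> deg_le; case: (boolP (is_edge e S1)) => [/is_edgeP[u [v [uv ->]]]|nedge]; last first.
  rewrite (_ : [set _ | _] = set0) ?cards0 //; apply/setP=> S2; rewrite !inE.
  by rewrite /inj_conflict (negbTE nedge) /= !andbF.
set conflicts := [set S2 | _].
have sub : conflicts \subset \bigcup_(z in edge_nbhd e u v) [set [set z; y] | y in nbhd e z].
  apply/subsetP=> S2; rewrite inE => /andP[_ conf].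
  have [b bS2 bE] := inj_conflict_meets_edge_nbhd uv conf.
  have /is_edgeP[x [y [xy S2E]]] : is_edge e S2 by case/orP: conf => /and4P[].
  apply/bigcupP; exists b => //; apply/imsetP; move: bS2; rewrite S2E !inE.
  by case/orP=> /eqP->; [exists y | exists x; rewrite 1?setUC]; rewrite // inE // e_sym.
apply: leq_trans (subset_leq_card sub) _.
apply: leq_trans (@card_bigcup_le_mul _ _ _ _ Dl _) _ => [z _|].
  by apply: leq_trans (leq_imset_card _ _) _; apply: deg_le.
by rewrite expnS expn1 mulnA mul2n leq_mul2r (card_edge_nbhd deg_le) orbT.
Qed.

Lemma inj_chromatic_index_le_greedy Dl : (forall x, deg e x <= Dl)%N ->
  (inj_chromatic_index e <= (2 * Dl ^ 2).+1)%N.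
Proof.
move=> deg_le.
have [f fP] := greedy_colouring (ltn0Sn _) (fun S => card_inj_conflicts_le S deg_le).
rewrite -[X in (_ <= X)%N]card_ord; apply: (inj_chromatic_index_le (f := f)).
by move=> S1 S2 conf; apply: fP (conf) _; case/and4P: conf.
Qed.

End InjectiveColourings.

Section LayeredColouring.
Variables (T : finType) (e : rel T).
Hypotheses (e_sym : symmetric e) (e_irr : irreflexive e).
Variables (c : nat) (col : T -> 'I_c).
Hypothesis col_proper : forall x y, e x y -> col x != col y.
Variables (k : nat) (Y : finType) (y0 : Y) (w : {ffun T * 'I_k -> Y}).

Definition fits (S : {set T}) (p : 'I_c.-1 * 'I_k) : bool :=
  [exists u, exists v,
    [&& e u v, S == [set u; v], col v == p.1.+1 :> nat & marks e y0 w p.2 u v]].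

Lemma fitsP S (p : 'I_c.-1 * 'I_k) : reflect
  (exists u v, [/\ e u v, S = [set u; v], col v = p.1.+1 :> nat & marks e y0 w p.2 u v])
  (fits S p).
Proof.
apply: (iffP existsP) => [[u /existsP[v /and4P[uv /eqP-> /eqP cv mk]]]|[u [v [uv -> cv mk]]]].
  by exists u, v.
by exists u; apply/existsP; exists v; rewrite uv eqxx cv eqxx mk.
Qed.

Hypothesis w_marks : forall u v, e u v -> exists i, marks e y0 w i u v.

Lemma fits_exists S : is_edge e S -> exists p, fits S p.
Proof.
case/is_edgeP=> x [y [xy ->]].
wlog lt_xy : x y xy / (col x < col y)%N.
  move=> fits_lt; case: (ltngtP (col x) (col y)) => [|lt_yx|eq_xy]; first exact: fits_lt.
    by rewrite setUC; apply: fits_lt; rewrite // e_sym.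
  by move: (col_proper xy); rewrite -(inj_eq val_inj) /= eq_xy eqxx.
have lt_yc : ((col y).-1 < c.-1)%N by have := ltn_ord (col y); lia.
have [i mk] := w_marks xy.
by exists (Ordinal lt_yc, i); apply/fitsP; exists x, y; split=> //=; lia.
Qed.

Lemma fits_adjacent S1 S2 p a b : fits S1 p -> fits S2 p ->
  a \in S1 -> b \in S2 -> e a b -> (a \in S2) || (b \in S1).
Proof.
case/fitsP=> u1 [v1 [uv1 -> cv1 mk1]] /fitsP[u2 [v2 [uv2 -> cv2 mk2]]].
have y0_u1 := marks_y0 e_sym uv1 mk1; have y0_u2 := marks_y0 e_sym uv2 mk2.
rewrite !inE => /orP[]/eqP-> /orP[]/eqP-> ab.
- by rewrite (marks_eq_y0 mk1 _ y0_u2) ?eqxx // !inE ab.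
- by rewrite (marks_eq_y0 mk2 _ y0_u1) ?eqxx // !inE (e_sym v2) ab orbT.
- by rewrite (marks_eq_y0 mk1 _ y0_u2) ?eqxx ?orbT // !inE ab orbT.
- by move: (col_proper ab); rewrite -(inj_eq val_inj) /= cv1 cv2 eqxx.
Qed.

Lemma fits_no_conflict S1 S2 p : fits S1 p -> fits S2 p -> ~~ inj_conflict e S1 S2.
Proof.
move=> fit1 fit2; apply/negP=> /(inj_conflict_adjacent e_sym e_irr).
case=> a [b [aS1 aNS2 bS2 bNS1 ab]].
by move: (fits_adjacent fit1 fit2 aS1 bS2 ab); rewrite (negbTE aNS2) (negbTE bNS1).
Qed.

Lemma inj_chromatic_index_le_layers : (0 < c.-1)%N -> (0 < k)%N ->
  (inj_chromatic_index e <= c.-1 * k)%N.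
Proof.
move=> c_gt0 k_gt0; pose p0 := (Ordinal c_gt0, Ordinal k_gt0).
pose f S := odflt p0 [pick p | fits S p].
have f_fits S : is_edge e S -> fits S (f S).
  by case/fits_exists=> p fit; rewrite /f; case: pickP => [//|none]; rewrite none in fit.
apply: leq_trans (inj_chromatic_index_le (f := f) _) _; last by rewrite card_prod !card_ord.
move=> S1 S2 conf; apply/eqP=> eq_f.
have [edge1 edge2] : is_edge e S1 /\ is_edge e S2 by case/and4P: conf.
have := f_fits _ edge2; rewrite -eq_f => fit2.
by move: (fits_no_conflict (f_fits _ edge1) fit2); rewrite conf.
Qed.

End LayeredColouring.

Section MainBound.
Variables (T : finType) (e : rel T).
Hypotheses (e_sym : symmetric e) (e_irr : irreflexive e).

Lemma deg_le_max_degree x : (deg e x <= max_degree e)%N.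
Proof. exact: (leq_bigmax (F := deg e)). Qed.

Lemma colorable_chromatic_number : colorable e (chromatic_number e).
Proof.
have colorable_card : colorable e #|T|.
  apply/existsP; exists [ffun x => enum_rank x]; apply/forallP=> x; apply/forallP=> y.
  apply/implyP=> xy; rewrite !ffunE (inj_eq enum_rank_inj).
  by apply: contraTneq xy => ->; rewrite e_irr.
have has_col : has (colorable e) (iota 0 #|T|.+1).
  by apply/hasP; exists #|T|; rewrite // mem_iota add0n ltnSn.
have lt_chi : (chromatic_number e < #|T|.+1)%N by move: has_col; rewrite has_find size_iota.
by have := nth_find 0%N has_col; rewrite nth_iota ?add0n.
Qed.

Variable R : realType.
Local Open Scope ring_scope.

Lemma inj_chromatic_index_le_mul (Dl c k : nat) : (forall x, deg e x <= Dl)%N ->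
  (2 <= Dl)%N -> (2 <= c)%N -> colorable e c ->
  27 * Dl%:R * ln (Dl%:R : R) <= k%:R -> (inj_chromatic_index e <= c.-1 * k)%N.
Proof.
move=> deg_le D_ge2 c_ge2 /existsP[col /forallP col_proper] le_k.
have D_gt1 : 1 < Dl%:R :> R by rewrite (ltr_nat R 1).
have k_gt0 : (0 < k)%N.
  rewrite -(ltr_nat R) (lt_le_trans _ le_k) // !mulr_gt0 ?ln_gt0 //; lra.
case: (leqP Dl 15) => [D_le15|D_ge16].
  apply: leq_trans (inj_chromatic_index_le_greedy e_sym e_irr deg_le) _.
  apply: (@leq_trans k); last by rewrite leq_pmull //; lia.
  by rewrite -(ler_nat R); apply: le_trans (greedy_bound_small_degree _ _ _) le_k.
have m_gt0 : (0 < Dl.*2)%N by rewrite double_gt0; lia.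
have [w w_marks] :=
  exists_marking_labelling e_sym deg_le (Ordinal m_gt0) (card_ord _) D_ge16 le_k.
apply: inj_chromatic_index_le_layers w_marks _ k_gt0 => //; last by lia.
by move=> x y xy; apply: (implyP (forallP (col_proper x) y)).
Qed.

Lemma inj_chromatic_index_le_ceil (Dl c : nat) : (forall x, deg e x <= Dl)%N ->
  (2 <= Dl)%N -> (2 <= c)%N -> colorable e c ->
  (inj_chromatic_index e)%:R
    <= c.-1%:R * (Num.ceil (27 * Dl%:R * ln (Dl%:R : R)))%:~R :> R.
Proof.
move=> deg_le D_ge2 c_ge2 col; set x := 27 * _ * _.
have x_ge0 : 0 <= x by rewrite !mulr_ge0 ?ln_ge0 // (ler_nat R 1); lia.
have [k ceil_k] : exists k : nat, Num.ceil x = k%:Z.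
  by exists `|Num.ceil x|%N; rewrite gez0_abs // ceil_ge0; lra.
have le_k : x <= k%:R by rewrite -[k%:R]/(k%:Z%:~R) -ceil_k ceil_ge.
by rewrite ceil_k -natrM ler_nat (inj_chromatic_index_le_mul deg_le D_ge2 c_ge2 col le_k).
Qed.

End MainBound.

Local Open Scope ring_scope.

Theorem theorem1p6 (R : realType) (T : finType) (e : rel T) :
  simple_graph e ->
  (forall (Delta chi : nat), (2 <= chi)%N -> (chi <= Delta)%N ->
     max_degree e = Delta -> chromatic_number e = chi ->
     ((inj_chromatic_index e)%:R : R)
       <= (chi.-1)%:R * (Num.ceil ((27 : R) * Delta%:R * ln (Delta%:R : R)))%:~R)
  /\
  (forall Delta : nat, (2 <= Delta)%N -> bipartite e -> max_degree e = Delta ->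
     ((inj_chromatic_index e)%:R : R)
       <= ((Num.ceil ((27 : R) * Delta%:R * ln (Delta%:R : R)))%:~R : R)).
Proof.
move=> [e_sym e_irr]; have deg_le := deg_le_max_degree e.
split=> [Delta chi chi_ge2 le_chi_D maxD chiE|Delta D_ge2 bip maxD]; subst Delta.
  apply: (inj_chromatic_index_le_ceil e_sym e_irr _ deg_le (leq_trans chi_ge2 le_chi_D) chi_ge2).
  by rewrite -chiE; exact: colorable_chromatic_number.
rewrite -[X in _ <= X]mul1r.
exact: (inj_chromatic_index_le_ceil e_sym e_irr _ deg_le D_ge2 (leqnn 2) bip).
Qed.
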